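(* Let $\Gamma$ be an alphabet and let $P_0,P_1,\dots,P_d$ be nonempty strings over $\Gamma$ such that $P_{j-1}$ is a prefix of $P_j$ for every $j\in\{1,\dots,d\}$. For a finite multiset $\mathcal{D}$ of strings over $\Gamma$ define \[ \Delta_{\mathcal{D}}=\big(\mathrm{freq}_{\mathcal{D}}(P_0),\ \mathrm{freq}_{\mathcal{D}}(P_1)-\mathrm{freq}_{\mathcal{D}}(P_0),\ \dots,\ \mathrm{freq}_{\mathcal{D}}(P_d)-\mathrm{freq}_{\mathcal{D}}(P_{d-1})\big)\in\mathbb{Z}^{d+1}. \] Let $S\in\mathcal{D}$, let $S'$ be any string over $\Gamma$, and let $\mathcal{D}'=(\mathcal{D}\setminus\{S\})\cup\{S'\}$ (one copy of $S$ replaced by $S'$). Then \[ \|\Delta_{\mathcal{D}}-\Delta_{\mathcal{D}'}\|_1\le 2\max\{\mathrm{freq}_S(P_0),\ \mathrm{freq}_{S'}(P_0)\}. \]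
   Context: For strings $P,S$, $\mathrm{freq}_S(P)$ is the number of positions $i$ with $S[i\ldots i+|P|-1]=P$, and for a multiset $\mathcal{D}$, $\mathrm{freq}_{\mathcal{D}}(P)=\sum_{S\in\mathcal{D}}\mathrm{freq}_S(P)$ (with multiplicity). In the paper, $P_0,\dots,P_d$ are the path labels of the nodes along a heavy path (from its head downward) in a trie-like candidate tree, so consecutive labels are prefixes of one another. *)

From mathcomp Require Import all_boot all_order all_algebra.
Set Implicit Arguments. Unset Strict Implicit. Unset Printing Implicit Defensive.
Import Order.TTheory GRing.Theory Num.Theory.
Local Open Scope ring_scope.

Definition freq (T : eqType) (S P : seq T) : nat :=
  count (fun i : nat => take (size P) (drop i S) == P) (iota 0 (size S).+1)%N.

Definition freqD (T : eqType) (D : seq (seq T)) (P : seq T) : nat :=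
  sumn (map (fun S => freq S P) D).

Definition Delta (T : eqType) (P : nat -> seq T) (D : seq (seq T)) (j : nat) : int :=
  if j == 0%N then (freqD D (P 0%N))%:Z
  else (freqD D (P j))%:Z - (freqD D (P j.-1))%:Z.

Definition Delta_dist (T : eqType) (d : nat) (P : nat -> seq T)
  (D D' : seq (seq T)) : int :=
  \sum_(j < d.+1) `|Delta P D j - Delta P D' j|.

(* Replacing S by S' changes freq_D(P_j) by y_j - x_j, where x_j = freq_S(P_j) and
   y_j = freq_S'(P_j).  Since the P_j extend one another, x and y are nonincreasing
   in j, so the L1 norm of the change of the difference vector is at most
   |x_0 - y_0| + (x_0 - x_d) + (y_0 - y_d) <= |x_0 - y_0| + x_0 + y_0 = 2 max(x_0, y_0). *)
From mathcomp Require Import all_boot all_order all_algebra.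
From mathcomp Require Import ring lra.
Set Implicit Arguments. Unset Strict Implicit. Unset Printing Implicit Defensive.
Import Order.TTheory GRing.Theory Num.Theory.
Local Open Scope ring_scope.

Lemma freq_prefix_leq (T : eqType) (S p q : seq T) :
  prefix p q -> (freq S q <= freq S p)%N.
Proof.
move=> /prefixP [r ->]; apply: sub_count => i /= /eqP occ_pr.
have : take (size p) (take (size (p ++ r)) (drop i S)) = p.
  by rewrite occ_pr take_size_cat.
by rewrite take_takel ?size_cat ?leq_addr // => ->.
Qed.

Lemma freqD_cons_rem (T : eqType) (D : seq (seq T)) (S S' P : seq T) :
  S \in D ->
  (freqD (S' :: rem S D) P)%:Z = (freqD D P)%:Z - (freq S P)%:Z + (freq S' P)%:Z.
Proof.
move=> SD; rewrite /freqD (perm_sumn (perm_map _ (perm_to_rem SD))) /= !PoszD.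
ring.
Qed.

Definition diffseq (x : nat -> int) (j : nat) : int :=
  if j == 0%N then x 0%N else x j - x j.-1.

Lemma diffseqB (x y : nat -> int) (j : nat) :
  diffseq x j - diffseq y j = diffseq (fun i => x i - y i) j.
Proof. by rewrite /diffseq; case: eqP => _ //; ring. Qed.

Lemma Delta_cons_rem (T : eqType) (P : nat -> seq T) (D : seq (seq T))
    (S S' : seq T) (j : nat) : S \in D ->
  Delta P D j - Delta P (S' :: rem S D) j
  = diffseq (fun i => (freq S (P i))%:Z) j - diffseq (fun i => (freq S' (P i))%:Z) j.
Proof.
move=> SD; rewrite diffseqB /Delta /diffseq.
by case: eqP => _; rewrite !freqD_cons_rem //; ring.
Qed.

Lemma sum_norm_diffseqB_le (x y : nat -> int) (d : nat) :
  (forall j, (0 < j <= d)%N -> x j <= x j.-1) ->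
  (forall j, (0 < j <= d)%N -> y j <= y j.-1) ->
  \sum_(j < d.+1) `|diffseq x j - diffseq y j|
    <= `|x 0%N - y 0%N| + (x 0%N - x d) + (y 0%N - y d).
Proof.
elim: d => [|d IH] x_dec y_dec.
  by rewrite big_ord_recr big_ord0 /= add0r !subrr !addr0.
have x_step : x d.+1 <= x d by apply: x_dec; rewrite leqnn.
have y_step : y d.+1 <= y d by apply: y_dec; rewrite leqnn.
have IHd : \sum_(j < d.+1) `|diffseq x j - diffseq y j|
    <= `|x 0%N - y 0%N| + (x 0%N - x d) + (y 0%N - y d).
  by apply: IH => j /andP[j_gt0 j_le]; [apply: x_dec | apply: y_dec];
     rewrite j_gt0 leqW.
rewrite big_ord_recr /=; apply: le_trans (lerD IHd (ler_normB _ _)) _.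
rewrite /diffseq /= (ler0_norm (x := x d.+1 - x d)) ?subr_le0 //.
by rewrite (ler0_norm (x := y d.+1 - y d)) ?subr_le0 //; lra.
Qed.

Lemma normB_addn_max (a b : nat) :
  `|a%:Z - b%:Z| + a%:Z + b%:Z = 2 * (maxn a b)%:Z.
Proof.
case: (leqP a b) => ab.
  by rewrite ler0_norm ?subr_le0 ?lez_nat //; ring.
by rewrite gtr0_norm ?subr_gt0 ?ltz_nat //; ring.
Qed.

Theorem mainTheorem3 (T : eqType) (d : nat) (P : nat -> seq T)
  (hne : forall j : nat, (j <= d)%N -> P j != [::])
  (hpre : forall j : nat, (0 < j <= d)%N -> prefix (P j.-1) (P j))
  (D : seq (seq T)) (S S' : seq T) (hS : S \in D) :
  Delta_dist d P D (S' :: rem S D)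
    <= 2 * (maxn (freq S (P 0%N)) (freq S' (P 0%N)))%:Z.
Proof.
pose x j := (freq S (P j))%:Z; pose y j := (freq S' (P j))%:Z.
have -> : Delta_dist d P D (S' :: rem S D)
    = \sum_(j < d.+1) `|diffseq x j - diffseq y j|.
  by apply: eq_bigr => j _; rewrite Delta_cons_rem.
have x_dec j (hj : (0 < j <= d)%N) : x j <= x j.-1.
  by rewrite lez_nat freq_prefix_leq ?hpre.
have y_dec j (hj : (0 < j <= d)%N) : y j <= y j.-1.
  by rewrite lez_nat freq_prefix_leq ?hpre.
apply: (le_trans (sum_norm_diffseqB_le x_dec y_dec)).
rewrite -normB_addn_max -/(x 0%N) -/(y 0%N).
have [xd_ge0 yd_ge0] : 0 <= x d /\ 0 <= y d by [].
lra.
Qed.
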